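(* Let $S$ be as in the context and $1\le k<n$. Let $p_1,\dots,p_r$ be pairwise node-disjoint sequences $p_l=(x_{l,1},\dots,x_{l,w_l})$, $w_l\ge2$, of pairwise distinct nodes of $G_k(S)$ such that for every $1\le t<w_l$, $x_{l,t+1}$ is the only successor of $x_{l,t}$ and $x_{l,t}$ is the only predecessor of $x_{l,t+1}$, and suppose that every fusible edge of $G_k(S)$ is of the form $(x_{l,t},x_{l,t+1})$ for some $l$ and $t$. Let $[i_l,j_l]$ be the $x_{l,w_l}$-interval, so that $\langle w_l-1,[i_l,j_l]\rangle$ is a prefix interval. Let $L'$ be the string obtained from $L$ by deleting every entry at a position of the form $\mathrm{LF}^t[y]$ with $1\le l\le r$, $i_l<y\le j_l$ and $0\le t<w_l-1$ (i.e. the $L$-component of the tunneled BWT obtained by tunneling these prefix intervals). Then $|L'|=m_k$, the number of edges of the edge-reduced de Bruijn graph $\tilde G_k(S)$ counted with multiplicity.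
   Context: $\Sigma$ is a finite totally ordered alphabet containing a symbol $\$$ smaller than every other symbol. $S$ is a string of length $n\ge 2$ over $\Sigma$ whose last character is $\$$ and in which $\$$ occurs nowhere else; strings are indexed from $1$. The rotations of $S$ are the $n$ strings $S[i..n]S[1..i-1]$, $i\in[1,n]$. For $1\le k\le n$ let $Z_k(S)=S[1..n]S[1..k]$. The order-$k$ de Bruijn graph $G_k(S)$ is the directed multigraph with node set $\{Z_k(S)[i..i+k-1]: i\in[1,n]\}$ that, for every $z\in\Sigma^{k+1}$ occurring exactly $m\ge1$ times as a substring of $Z_k(S)$, contains the edge $(z[1..k],z[2..k+1])$ with multiplicity $m$. $x$ is a predecessor of $y$ (and $y$ a successor of $x$) if there is an edge $(x,y)$ of positive multiplicity. An edge $(x,y)$ is fusible if $y$ is the only successor of $x$ and $x$ is the only predecessor of $y$. The edge-reduced de Bruijn graph $\tilde G_k(S)$ is obtained from $G_k(S)$ by setting the multiplicity of every fusible edge to $1$. Let $M$ be the $n\times n$ matrix whose rows (indexed $1,\dots,n$) are the rotations of $S$ sorted lexicographically, and let $L[i]$ be the last character of row $i$ (the BWT of $S$). For $c\in\Sigma$, $C[c]$ is the number of characters of $S$ strictly smaller than $c$, and $\mathrm{rank}_c(L,i)$ is the number of occurrences of $c$ in $L[1..i]$. The LF-mapping is $\mathrm{LF}[i]=C[L[i]]+\mathrm{rank}_{L[i]}(L,i)$, a permutation of $[1,n]$; $\mathrm{LF}^t$ is its $t$-fold iterate ($\mathrm{LF}^0$ the identity) and $\mathrm{LF}^{-1}$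 its inverse. For a string $x$ that is a prefix of some rotation, the $x$-interval is the set of indices of rows of $M$ that begin with $x$ (an interval $[i,j]$). A prefix interval $\langle w,[i,j]\rangle$ consists of an integer $w\ge0$ and an interval $[i,j]\subseteq[1,n]$ such that for every integer $t$ with $-1\le t<w$ the characters $L[\mathrm{LF}^t[i]],\dots,L[\mathrm{LF}^t[j]]$ are all equal. *)

(* Alphabet = nat with its usual order, the sentinel $ = 0. *)
From mathcomp Require Import all_boot.
Set Implicit Arguments. Unset Strict Implicit. Unset Printing Implicit Defensive.

Fixpoint lexle (s t : seq nat) : bool :=
  match s, t with
  | [::], _ => true
  | _ :: _, [::] => false
  | a :: s', b :: t' => (a < b) || ((a == b) && lexle s' t')
  end.

Definition valid_text (S : seq nat) : Prop :=
  2 <= size S /\ last 1 S = 0 /\ 0 \notin take (size S).-1 S.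

(* 1-indexed substring x[i..i+len-1] *)
Definition substr (x : seq nat) (i len : nat) : seq nat := take len (drop i.-1 x).

Definition rotations (S : seq nat) : seq (seq nat) :=
  [seq rot i.-1 S | i <- iota 1 (size S)].
Definition BWM (S : seq nat) : seq (seq nat) := sort lexle (rotations S).
(* row i of M, 1-indexed *)
Definition row (S : seq nat) (i : nat) : seq nat := nth [::] (BWM S) i.-1.
(* BWT L and L[i], 1-indexed *)
Definition BWT (S : seq nat) : seq nat := [seq last 0 r | r <- BWM S].
Definition Lat (S : seq nat) (i : nat) : nat := nth 0 (BWT S) i.-1.
Definition Ccount (S : seq nat) (c : nat) : nat := count (fun a => a < c) S.
Definition rankc (S : seq nat) (c i : nat) : nat := count (pred1 c) (take i (BWT S)).
Definition LF (S : seq nat) (i : nat) : nat :=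
  Ccount S (Lat S i) + rankc S (Lat S i) i.

(* x-interval [lo,hi]: least and greatest index of a row of M beginning with x *)
Definition begins (x r : seq nat) : bool := take (size x) r == x.
Definition xint_lo (S x : seq nat) : nat := (find (begins x) (BWM S)).+1.
Definition xint_hi (S x : seq nat) : nat :=
  size (BWM S) - find (begins x) (rev (BWM S)).

Definition Zk (S : seq nat) (k : nat) : seq nat := S ++ take k S.
Definition dbg_nodes (S : seq nat) (k : nat) : seq (seq nat) :=
  undup [seq substr (Zk S k) i k | i <- iota 1 (size S)].
Definition mult (S : seq nat) (k : nat) (x y : seq nat) : nat :=
  count (fun i => let z := substr (Zk S k) i k.+1 in
                  (size z == k.+1) && (take k z == x) && (drop 1 z == y))
        (iota 1 (size (Zk S k))).
Definition is_edge S k x y : bool := 0 < mult S k x y.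
Definition only_succ S k (x y : seq nat) : Prop :=
  is_edge S k x y /\ forall y', y' \in dbg_nodes S k -> is_edge S k x y' -> y' = y.
Definition only_pred S k (x y : seq nat) : Prop :=
  is_edge S k x y /\ forall x', x' \in dbg_nodes S k -> is_edge S k x' y -> x' = x.
Definition fusible S k x y : Prop := only_succ S k x y /\ only_pred S k x y.
Definition fusibleb S k x y : bool :=
  [&& is_edge S k x y,
      all (fun y' => is_edge S k x y' ==> (y' == y)) (dbg_nodes S k) &
      all (fun x' => is_edge S k x' y ==> (x' == x)) (dbg_nodes S k)].

Definition mk (S : seq nat) (k : nat) : nat :=
  \sum_(x <- dbg_nodes S k) \sum_(y <- dbg_nodes S k)
     (if fusibleb S k x y then 1 else mult S k x y).

(* tunneling: positions LF^t[y], i_l < y <= j_l, 0 <= t < w_l - 1, where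
   [i_l, j_l] is the x_{l,w_l}-interval *)
Definition deleted (S : seq nat) (P : seq (seq (seq nat))) (q : nat) : bool :=
  has (fun p =>
         let x := last [::] p in
         has (fun y => has (fun t => q == iter t (LF S) y) (iota 0 (size p).-1))
             (iota (xint_lo S x).+1 (xint_hi S x - xint_lo S x)))
      P.
Definition Lprime (S : seq nat) (P : seq (seq (seq nat))) : seq nat :=
  [seq Lat S q | q <- iota 1 (size S) & ~~ deleted S P q].

(* Every row v of the BWT matrix is one occurrence of the edge
   (v[1..k], (rot 1 v)[1..k]) of G_k(S), so the multiplicities of G_k(S) sum
   to n, and m_k = n - Σ (mult(x,y) - 1) over the fusible edges (x,y).
   Along a chain p_l all multiplicities equal the number c_l of rows beginning
   with x_{l,w_l}, i.e. the size of its interval.  LF maps the row of a rotation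
   u to the row of rotr 1 u, so for 0 <= t < w_l - 1 the positions LF^t[y],
   i_l < y <= j_l, are the rows of rotr^t of the rotations in that interval:
   (c_l - 1)(w_l - 1) distinct rows, beginning with x_{l,w_l-t}, hence also
   distinct across node-disjoint chains.  Since every fusible edge lies on a
   chain, |L'| = n - Σ_l (c_l - 1)(w_l - 1) = m_k. *)

From mathcomp Require Import all_boot zify.
Set Implicit Arguments. Unset Strict Implicit. Unset Printing Implicit Defensive.

Lemma count_take_index (T : eqType) (a : pred T) (s : seq T) i : uniq s ->
  count a (take i s) = count (fun v => a v && (index v s < i)) s.
Proof.
move=> us; set b := fun v => _.
rewrite -[in RHS](cat_take_drop i s) count_cat {}/b.
have ud : uniq (take i s ++ drop i s) by rewrite cat_take_drop.
rewrite (@eq_in_count _ _ a (take i s)); last first.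
  by move=> x xt; rewrite -in_take ?xt ?andbT // (mem_take xt).
rewrite (@eq_in_count _ _ pred0 (drop i s)) ?count_pred0 ?addn0 // => x xd /=.
have xs : x \in s by rewrite -(cat_take_drop i s) mem_cat xd orbT.
move: ud; rewrite cat_uniq => /and3P[_ /hasPn/(_ x xd) xt _].
by rewrite -in_take // (negbTE xt) andbF.
Qed.

Lemma count_disjoint (T : Type) (a b : pred T) (s : seq T) :
  (forall x, a x -> b x -> False) -> count (predU a b) s = count a s + count b s.
Proof.
move=> ab; rewrite -count_predUI (@eq_count _ (predI a b) pred0) ?count_pred0 ?addn0 //.
by move=> x /=; case ax: (a x); case bx: (b x) => //; case: (ab x).
Qed.

Lemma count_iota_range a b n : a <= b <= n ->
  count (fun m => a <= m < b) (iota 0 n) = b - a.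
Proof.
move=> /andP[ab bn].
have -> : n = a + (b - a) + (n - b) by lia.
rewrite !iotaD !count_cat.
rewrite (@eq_in_count _ _ pred0 (iota 0 a)); last by move=> x; rewrite mem_iota /= => ?; lia.
rewrite (@eq_in_count _ _ predT (iota (0 + a) _)); last by move=> x; rewrite mem_iota /= => ?; lia.
rewrite (@eq_in_count _ _ pred0 (iota _ (n - b))); last by move=> x; rewrite mem_iota /= => ?; lia.
by rewrite !count_pred0 count_predT size_iota; lia.
Qed.

Lemma count_mem_sub (T : eqType) (s D : seq T) : uniq s -> uniq D -> {subset D <= s} ->
  count (mem D) s = size D.
Proof.
move=> us uD sub; rewrite -size_filter; apply/perm_size/uniq_perm; rewrite ?filter_uniq //.
by move=> x; rewrite mem_filter; apply/andP/idP => [[]//|xD]; split => //; apply: sub.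
Qed.

Lemma sum_pick_uniq (T : eqType) (s : seq T) a (c : nat) : uniq s -> a \in s ->
  \sum_(y <- s) ((a == y) * c) = c.
Proof.
move=> us aS; rewrite (bigD1_seq a) //= eqxx mul1n big1 ?addn0 //.
by move=> y /negbTE; rewrite eq_sym => ->.
Qed.

Lemma iter_inj (T : Type) (f : T -> T) t : injective f -> injective (iter t f).
Proof. by move=> f_inj; elim: t => //= t IH u v /f_inj /IH. Qed.

Lemma lexle_refl : reflexive lexle.
Proof. by elim=> //= a s ->; rewrite eqxx orbT. Qed.

Lemma lexle_trans : transitive lexle.
Proof.
move=> y x z; elim: x y z => [|a x IH] [|b y] [|c z] //=.
case/orP => [ab|/andP[/eqP <- xy]]; case/orP => [bc|/andP[/eqP <- yz]].
- by rewrite (ltn_trans ab bc).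
- by rewrite ab.
- by rewrite bc.
- by rewrite eqxx (IH _ _ xy yz) orbT.
Qed.

Lemma lexle_total : total lexle.
Proof.
elim=> [|a x IH] [|b y] //=.
by case: (ltngtP a b) => //= ->; rewrite eqxx /= IH.
Qed.

Lemma lexle_anti : antisymmetric lexle.
Proof.
elim=> [|a x IH] [|b y] //= /andP[].
case/orP => [ab|/andP[/eqP <- xy]]; case/orP => [ba|/andP[/eqP ba yx]]; try lia.
by rewrite (IH y) // xy yx.
Qed.

Lemma lexle_rcons a b c : size a = size b ->
  lexle (rcons a c) (rcons b c) = lexle a b.
Proof.
elim: a b => [|x a IH] [|y b] //=; first by rewrite ltnn eqxx.
by case=> /IH ->.
Qed.

Lemma lexlt_cons b v c a :
  lexle (b :: v) (c :: a) && (b :: v != c :: a) =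
  (b < c) || ((b == c) && (lexle v a && (v != a))).
Proof. by rewrite /= eqseq_cons; case: (ltngtP b c). Qed.

Lemma lexle_take_between m a b c : lexle a b -> lexle b c -> m <= size a ->
  take m a = take m c -> take m b = take m a.
Proof.
elim: m a b c => [|m IH] a b c; first by rewrite !take0.
case: a => [|e a] //; case: b => [|f b] //; case: c => [|g c] //=.
move=> le_ab le_bc sa [eg tac]; subst g.
case/orP: le_ab => [ef|/andP[/eqP ef ab]].
  by case/orP: le_bc => [fe|/andP[/eqP fe _]]; lia.
subst f; case/orP: le_bc => [ee|/andP[_ bc]]; first lia.
by rewrite (IH a b c ab bc sa tac).
Qed.

Section SortedIndex.
Variables (T : eqType) (leT : rel T) (s : seq T).
Hypotheses (leT_refl : reflexive leT) (leT_trans : transitive leT).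
Hypotheses (leT_anti : antisymmetric leT) (s_sorted : sorted leT s) (s_uniq : uniq s).

Lemma sorted_le_index u v : u \in s -> v \in s -> leT v u = (index v s <= index u s).
Proof.
move=> us vs; apply/idP/idP; last exact: (sorted_leq_index leT_trans leT_refl s_sorted).
move=> le_vu; rewrite leqNgt; apply/negP => lt_uv.
have le_uv := sorted_leq_index leT_trans leT_refl s_sorted u v us vs (ltnW lt_uv).
by move: lt_uv; rewrite (@leT_anti v u) ?le_vu ?ltnn.
Qed.

Lemma index_sorted_count u : u \in s ->
  index u s = count (fun v => leT v u && (v != u)) s.
Proof.
move=> us; have index_as_count : index u s = count predT (take (index u s) s).
  by rewrite count_predT size_takel ?index_size.
rewrite [LHS]index_as_count count_take_index //; apply: eq_in_count => v vs /=.
by rewrite sorted_le_index // ltn_neqAle andbC (inj_in_eq (index_inj u (s:=s))).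
Qed.

End SortedIndex.

Section ConvexPred.
Variables (T : Type) (x0 : T) (s : seq T) (a : pred T).
Hypothesis has_a : has a s.
Hypothesis a_convex : forall i j l, i < j -> j < l -> l < size s ->
  a (nth x0 s i) -> a (nth x0 s l) -> a (nth x0 s j).

Lemma nth_convexE m : m < size s ->
  a (nth x0 s m) = (find a s <= m < size s - find a (rev s)).
Proof.
move=> ms.
have fs : find a s < size s by rewrite -has_find.
have gs : find a (rev s) < size s by rewrite -(size_rev s) -has_find has_rev.
have Pf := nth_find x0 has_a.
have Pg := nth_find x0 (etrans (has_rev a s) has_a); rewrite nth_rev // in Pg.
apply/idP/idP => [am|/andP[fm mg]].
  apply/andP; split; first by rewrite leqNgt; apply/negP => /(before_find x0); rewrite am.
  rewrite ltnNge; apply/negP => gm.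
  have /(before_find x0) : size s - m.+1 < find a (rev s) by lia.
  rewrite nth_rev; last lia.
  have -> : size s - (size s - m.+1).+1 = m by lia.
  by rewrite am.
case: (ltngtP (find a s) m) => [lt_fm||<-//]; last lia.
case: (ltngtP m (size s - (find a (rev s)).+1)) => [lt_mg||->//]; last lia.
by apply: a_convex lt_fm lt_mg _ Pf Pg; lia.
Qed.

Lemma count_convex : count a s = size s - find a (rev s) - find a s.
Proof.
rewrite -{1}(mkseq_nth x0 s) /mkseq count_map.
rewrite (@eq_in_count _ _ (fun m => find a s <= m < size s - find a (rev s))); last first.
  by move=> m; rewrite mem_iota => /andP[_ ms] /=; rewrite nth_convexE.
have gs : find a (rev s) < size s by rewrite -(size_rev s) -has_find has_rev.
have Pg := nth_find x0 (etrans (has_rev a s) has_a); rewrite nth_rev // in Pg.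
have : find a s <= size s - (find a (rev s)).+1.
  by rewrite leqNgt; apply/negP => /(before_find x0); rewrite Pg.
by move=> fg; rewrite count_iota_range; lia.
Qed.

End ConvexPred.

Section Rotations.
Variable S : seq nat.

Lemma rotationsE : rotations S = [seq rot q S | q <- iota 0 (size S)].
Proof. by rewrite /rotations (iotaDl 1 0) -map_comp. Qed.

Lemma rotationsP v : reflect (exists2 q, q < size S & v = rot q S) (v \in rotations S).
Proof.
rewrite rotationsE; apply: (iffP mapP) => [[q]|[q]]; rewrite ?mem_iota => qS ->;
  by exists q; rewrite ?mem_iota.
Qed.

Lemma size_rotations v : v \in rotations S -> size v = size S.
Proof. by case/rotationsP => q _ ->; rewrite size_rot. Qed.

Lemma rotations_rot1 v : v \in rotations S -> rot 1 v \in rotations S.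
Proof.
case/rotationsP => q qS ->; apply/rotationsP; rewrite -rotS //.
case: (ltnP q.+1 (size S)) => [lt_qS|ge_qS]; first by exists q.+1.
by exists 0; [lia | rewrite rot0 (_ : q.+1 = size S) ?rot_size //; lia].
Qed.

Lemma rotations_rotr1 v : v \in rotations S -> rotr 1 v \in rotations S.
Proof.
case/rotationsP => [[|q]] qS ->; apply/rotationsP.
  by exists (size S - 1); [lia | rewrite rot0].
by exists q; [lia | rewrite rotS ?rotK //; lia].
Qed.

Lemma head_rotations : map (head 0) (rotations S) = S.
Proof.
rewrite rotationsE -map_comp -[RHS](mkseq_nth 0 S) /mkseq.
apply/eq_in_map => q; rewrite mem_iota /= => qS.
by rewrite /rot -nth0 nth_cat size_drop subn_gt0 qS nth_drop addn0.
Qed.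

Lemma uniq_rotations : valid_text S -> uniq (rotations S).
Proof.
case=> S2 [S_last S_no0].
have [s' S_rcons] : exists s', S = rcons s' 0.
  by move: S_last S2; case/lastP: S => [|s' c] //=; rewrite last_rcons => ->; exists s'.
have {}s'_no0 : 0 \notin s'.
  by move: S_no0; rewrite S_rcons size_rcons /= -cats1 take_size_cat.
(* the sentinel sits at a different position in every rotation *)
have index0_rot r : r < size S -> index 0 (rot r S) = size s' - r.
  rewrite S_rcons size_rcons => rS; rewrite /rot -cats1 drop_cat.
  case: ltnP => H.
    rewrite -catA index_cat (negbTE (contra (@mem_drop _ _ _ _) s'_no0)).
    by rewrite /= ?eqxx addn0 size_drop.
  by rewrite (_ : r = size s') ?subnn ?drop0 /= ?eqxx //; lia.
rewrite rotationsE map_inj_in_uniq ?iota_uniq // => p q.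
rewrite !mem_iota /= => pS qS e.
by have := index0_rot p pS; rewrite e index0_rot //; move: pS qS; rewrite S_rcons size_rcons; lia.
Qed.

End Rotations.

Section BWM.
Variable S : seq nat.
Local Notation M := (BWM S).

Lemma perm_BWM : perm_eq M (rotations S).
Proof. by rewrite /BWM perm_sort. Qed.

Lemma mem_BWM v : (v \in M) = (v \in rotations S).
Proof. exact: (perm_mem perm_BWM). Qed.

Lemma sorted_BWM : sorted lexle M.
Proof. exact: (sort_sorted lexle_total). Qed.

Lemma size_BWM : size M = size S.
Proof. by rewrite (perm_size perm_BWM) /rotations size_map size_iota. Qed.

Lemma size_row_BWM v : v \in M -> size v = size S.
Proof. by rewrite mem_BWM => /size_rotations. Qed.

Lemma BWM_rot1 v : v \in M -> rot 1 v \in M.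
Proof. by rewrite !mem_BWM => /rotations_rot1. Qed.

Lemma BWM_rotr1 v : v \in M -> rotr 1 v \in M.
Proof. by rewrite !mem_BWM => /rotations_rotr1. Qed.

Lemma BWM_iter_rotr1 t v : v \in M -> iter t (rotr 1) v \in M.
Proof. by move=> vM; elim: t => //= t; exact: BWM_rotr1. Qed.

Lemma Lat_index u : u \in M -> Lat S (index u M).+1 = last 0 u.
Proof. by move=> uM; rewrite /Lat /BWT /= (nth_map [::]) ?index_mem ?nth_index. Qed.

Hypothesis vS : valid_text S.

Lemma uniq_BWM : uniq M.
Proof. by rewrite (perm_uniq perm_BWM) uniq_rotations. Qed.

Lemma nonempty_row_BWM v : v \in M -> 0 < size v.
Proof. by case: vS => S2 _ /size_row_BWM ->; lia. Qed.

Lemma perm_rotr_BWM : perm_eq (map (rotr 1) M) M.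
Proof.
apply: uniq_perm; rewrite ?map_inj_uniq ?uniq_BWM //; first exact: rotr_inj.
move=> v; apply/mapP/idP => [[w wM ->]|vM]; first exact: BWM_rotr1.
by exists (rot 1 v); rewrite ?rotK ?BWM_rot1.
Qed.

Lemma perm_rot_BWM : perm_eq (map (rot 1) M) M.
Proof.
apply: uniq_perm; rewrite ?map_inj_uniq ?uniq_BWM //; first exact: rot_inj.
move=> v; apply/mapP/idP => [[w wM ->]|vM]; first exact: BWM_rot1.
by exists (rotr 1 v); rewrite ?rotrK ?BWM_rotr1.
Qed.

Lemma Ccount_BWM c : Ccount S c = count (fun v => head 0 v < c) M.
Proof. by rewrite /Ccount -{1}(head_rotations S) count_map (permP perm_BWM). Qed.

Lemma rankc_index c u : u \in M ->
  rankc S c (index u M).+1 = count (fun w => (last 0 w == c) && lexle w u) M.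
Proof.
move=> uM; rewrite /rankc /BWT -map_take count_map count_take_index ?uniq_BWM //.
apply: eq_in_count => w wM /=; congr andb.
by rewrite ltnS (sorted_le_index lexle_refl lexle_trans lexle_anti sorted_BWM).
Qed.

(* Rotating right by one is an order-preserving bijection between the rows
   beginning with [c] and the rows ending with [c]. *)
Lemma count_head_lexlt a c : rcons a c \in M ->
  count (fun v => (head 0 v == c) && (lexle (behead v) a && (behead v != a))) M =
  count (fun w => (last 0 w == c) && (lexle w (rcons a c) && (w != rcons a c))) M.
Proof.
move=> acM; rewrite -(permP perm_rotr_BWM) count_map.
apply: eq_in_count => w wM /=.
have := nonempty_row_BWM wM; case/lastP: w wM => [//|d b] wM _.
rewrite rotr1_rcons last_rcons /= eqseq_rcons.
case: eqP => [->|] //=; rewrite lexle_rcons ?eqxx ?andbT //.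
have := size_row_BWM wM; have := size_row_BWM acM; rewrite !size_rcons.
by move=> e1 e2; apply: succn_inj; rewrite e1 e2.
Qed.

Lemma LF_index u : u \in M -> LF S (index u M).+1 = (index (rotr 1 u) M).+1.
Proof.
move=> uM; have ruM := BWM_rotr1 uM.
rewrite (index_sorted_count lexle_refl lexle_trans lexle_anti sorted_BWM uniq_BWM ruM).
rewrite /LF Lat_index // Ccount_BWM rankc_index //.
have := nonempty_row_BWM uM; case/lastP: u uM ruM => [//|a c] uM ruM _.
rewrite last_rcons rotr1_rcons.
(* The rows below [c :: a] are those with a smaller first character, counted
   by C[c], and the rows [c :: v] with [v < a]; the latter correspond to the
   rows [rcons v c] below [u], which the rank counts together with [u]. *)
rewrite (@eq_in_count _ _ (predU (fun v => head 0 v < c)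
     (fun v => (head 0 v == c) && (lexle (behead v) a && (behead v != a))))); last first.
  move=> v vM; have := nonempty_row_BWM vM.
  by case: v vM => [//|b v] _ _; rewrite lexlt_cons.
rewrite count_disjoint; last by move=> v /= lt /andP[/eqP eq _]; lia.
rewrite count_head_lexlt // -addnS; congr (_ + _).
rewrite (@eq_in_count _ _ (predU (fun w => (last 0 w == c) &&
     (lexle w (rcons a c) && (w != rcons a c))) (pred1 (rcons a c)))); last first.
  move=> w _ /=; case: (w =P rcons a c) => [->|ne]; first by rewrite last_rcons eqxx lexle_refl orbT.
  by rewrite andbT orbF.
rewrite count_disjoint; last by move=> w /= /andP[_ /andP[_ /eqP ne]] /eqP.
by rewrite count_uniq_mem ?uniq_BWM // uM addn1.
Qed.

Lemma iter_LF_index t u : u \in M ->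
  iter t (LF S) (index u M).+1 = (index (iter t (rotr 1) u) M).+1.
Proof.
elim: t u => [//|t IH] u uM.
by rewrite iterSr LF_index // IH ?BWM_rotr1 // -iterSr.
Qed.

End BWM.

Lemma fusibleP S k x y : reflect (fusible S k x y) (fusibleb S k x y).
Proof.
apply: (iffP and3P) => [[e succ pred]|[[e succ] [_ pred]]].
  by split; split=> // z zN ez; apply/eqP; [move: (allP succ z zN) | move: (allP pred z zN)];
    rewrite ez.
by split=> //; apply/allP => z zN; apply/implyP => ez; rewrite ?(succ z zN ez) ?(pred z zN ez).
Qed.

Section DeBruijn.
Variables (S : seq nat) (k : nat).
Hypothesis vS : valid_text S.
Hypothesis hk : 1 <= k < size S.
Local Notation M := (BWM S).
Local Notation N := (dbg_nodes S k).

Lemma substr_Zk_rot q m : q < size S -> m <= size S -> m <= k.+1 ->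
  substr (Zk S k) q.+1 m = take m (rot q S).
Proof.
move=> qS mS mk; rewrite /substr /Zk /rot /= drop_cat qS !take_cat size_drop.
case: ltnP => // H; congr (_ ++ _).
by rewrite -!take_min; congr take; lia.
Qed.

Lemma dbg_nodesE : N = undup [seq take k v | v <- rotations S].
Proof.
rewrite /dbg_nodes rotationsE (iotaDl 1 0) -!map_comp; congr undup.
apply/eq_in_map => q; rewrite mem_iota /= => qS.
by rewrite add1n substr_Zk_rot //; lia.
Qed.

Lemma take_BWM_node v : v \in M -> take k v \in N.
Proof. by move=> vM; rewrite dbg_nodesE mem_undup map_f // -mem_BWM. Qed.

Lemma dbg_nodesP x : x \in N -> exists2 v, v \in M & x = take k v.
Proof. by rewrite dbg_nodesE mem_undup => /mapP[v vR ->]; exists v; rewrite ?mem_BWM. Qed.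

Lemma size_node x : x \in N -> size x = k.
Proof. by case/dbg_nodesP => v vM ->; rewrite size_takel // (size_row_BWM vM); lia. Qed.

(* Row [v] of M is the occurrence of the (k+1)-mer starting at its first character. *)
Lemma multE x y :
  mult S k x y = count (fun v => (take k v == x) && (take k (rot 1 v) == y)) M.
Proof.
rewrite (permP (perm_BWM S)) /mult size_cat size_takel; last lia.
rewrite iotaD count_cat (@eq_in_count _ _ pred0 (iota (1 + size S) k)); last first.
  move=> i; rewrite mem_iota => /andP[H1 H2] /=.
  rewrite /substr size_take size_drop size_cat size_takel; last lia.
  by case: ltnP => H3; [lia | rewrite eqn_leq; apply/negbTE; lia].
rewrite count_pred0 addn0 rotationsE count_map (iotaDl 1 0) count_map.
apply: eq_in_count => q; rewrite mem_iota /= => qS.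
rewrite add1n substr_Zk_rot; try lia.
rewrite size_takel ?size_rot ?eqxx /=; last lia.
rewrite -take_min (_ : minn k k.+1 = k); last lia.
rewrite -[k.+1]addn1 -take_drop.
have sv : size (rot q S) = size S by rewrite size_rot.
set v := rot q S in sv *.
by rewrite /rot takel_cat // size_drop sv; lia.
Qed.

Lemma is_edge_row v : v \in M -> is_edge S k (take k v) (take k (rot 1 v)).
Proof. by move=> vM; rewrite /is_edge multE -has_count; apply/hasP; exists v; rewrite ?eqxx. Qed.

Definition occ x := count (fun v => take k v == x) M.

Lemma mult_only_succ x y : only_succ S k x y -> mult S k x y = occ x.
Proof.
case=> _ succ; rewrite multE /occ; apply: eq_in_count => v vM /=.
case: (take k v =P x) => [ex|//] /=; subst x.
by apply/eqP; apply: succ; [exact/take_BWM_node/BWM_rot1 | exact: is_edge_row].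
Qed.

Lemma mult_only_pred x y : only_pred S k x y -> mult S k x y = occ y.
Proof.
case=> _ pred; rewrite multE /occ -[in RHS](permP (perm_rot_BWM vS)) count_map.
apply: eq_in_count => v vM /=.
case: (take k (rot 1 v) =P y) => [ey|]; last by rewrite andbF.
by subst y; rewrite andbT; apply/eqP; apply: pred; [exact: take_BWM_node | exact: is_edge_row].
Qed.


Lemma sum_mult : \sum_(x <- N) \sum_(y <- N) mult S k x y = size S.
Proof.
under eq_bigr => x _ do under eq_bigr => y _ do
  rewrite multE -sum1_count big_mkcond /=.
under eq_bigr => x _ do rewrite exchange_big.
rewrite exchange_big -(size_BWM S) -sum1_size; apply: eq_big_seq => v vM.
rewrite -[RHS](sum_pick_uniq 1 (undup_uniq _) (take_BWM_node vM)); apply: eq_bigr => x _.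
rewrite -[RHS](sum_pick_uniq _ (undup_uniq _) (take_BWM_node (BWM_rot1 vM))).
by apply: eq_bigr => y _; case: (_ == x); case: (_ == y).
Qed.

(* [mk] counts a fusible edge once instead of [mult] times; this is the difference. *)
Definition fusion_excess :=
  \sum_(x <- N) \sum_(y <- N) (if fusibleb S k x y then (mult S k x y).-1 else 0).

Lemma mk_add_fusion_excess : mk S k + fusion_excess = size S.
Proof.
rewrite -sum_mult /mk -big_split; apply: eq_bigr => x _.
rewrite -big_split; apply: eq_bigr => y _ /=.
case: ifP => [/and3P[e _ _]|_]; last by rewrite addn0.
by rewrite /is_edge in e; rewrite add1n prednK.
Qed.

Section Interval.
Variable x : seq nat.
Hypothesis xN : x \in N.

Lemma begins_node v : begins x v = (take k v == x).
Proof. by rewrite /begins size_node. Qed.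

Lemma has_begins_node : has (begins x) M.
Proof.
have [v vM xv] := dbg_nodesP xN.
by apply/hasP; exists v; rewrite // begins_node xv.
Qed.

Lemma begins_node_convex i j l : i < j -> j < l -> l < size M ->
  begins x (nth [::] M i) -> begins x (nth [::] M l) -> begins x (nth [::] M j).
Proof.
move=> ij jl lM; rewrite !begins_node => /eqP ti /eqP tl.
have iM : i < size M by lia.
have jM : j < size M by lia.
have le_ij := sorted_leq_nth lexle_trans lexle_refl [::] (sorted_BWM S) _ _ iM jM (ltnW ij).
have le_jl := sorted_leq_nth lexle_trans lexle_refl [::] (sorted_BWM S) _ _ jM lM (ltnW jl).
have ki : k <= size (nth [::] M i) by rewrite (size_row_BWM (mem_nth _ iM)); lia.
by rewrite (lexle_take_between le_ij le_jl ki) ?ti ?tl.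
Qed.

Lemma interval_size : xint_hi S x - xint_lo S x = (occ x).-1.
Proof.
rewrite /occ -(eq_count begins_node).
by rewrite (count_convex has_begins_node begins_node_convex) /xint_hi /xint_lo; lia.
Qed.

Lemma interval_rows y : xint_lo S x < y <= xint_hi S x ->
  y.-1 < size M /\ take k (nth [::] M y.-1) = x.
Proof.
rewrite /xint_hi /xint_lo => yI.
have yM : y.-1 < size M by lia.
split=> //; apply/eqP; rewrite -begins_node.
by rewrite (nth_convexE has_begins_node begins_node_convex yM); lia.
Qed.

End Interval.

Section Chain.
Variable p : seq (seq nat).
Hypothesis p_unique : forall t, t.+1 < size p ->
  only_succ S k (nth [::] p t) (nth [::] p t.+1) /\
  only_pred S k (nth [::] p t) (nth [::] p t.+1).

(* Going back along a row with [rotr 1] follows the unique predecessors. *)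
Lemma take_iter_rotr_chain u t : u \in M -> take k u = last [::] p -> t < size p ->
  take k (iter t (rotr 1) u) = nth [::] p ((size p).-1 - t).
Proof.
move=> uM ul; elim: t => [|t IH] tp; first by rewrite subn0 nth_last.
have [_ [_ pred]] := p_unique (t := (size p).-1 - t.+1) ltac:(lia).
rewrite (_ : ((size p).-1 - t.+1).+1 = (size p).-1 - t) in pred; last lia.
have vM := BWM_iter_rotr1 t uM.
rewrite iterS; apply: pred; first exact/take_BWM_node/BWM_rotr1.
by rewrite -[in X in is_edge _ _ _ X]IH 1?ltnW // -{2}(rotrK 1 (iter t _ u)) is_edge_row ?BWM_rotr1.
Qed.

Lemma occ_chain j : j < size p -> occ (nth [::] p j) = occ (last [::] p).
Proof.
move=> jp; rewrite -nth_last.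
have -> : j = (size p).-1 - ((size p).-1 - j) by lia.
elim: ((size p).-1 - j) (leq_subr j (size p).-1) => [|d IH] dp; first by rewrite subn0.
rewrite -IH; last lia.
have [succ pred] := p_unique (t := (size p).-1 - d.+1) ltac:(lia).
rewrite (_ : (size p).-1 - d = ((size p).-1 - d.+1).+1); last lia.
by rewrite -(mult_only_succ succ) (mult_only_pred pred).
Qed.

Lemma mult_chain t : t.+1 < size p ->
  mult S k (nth [::] p t) (nth [::] p t.+1) = occ (last [::] p).
Proof. by move=> tp; have [_ pred] := p_unique tp; rewrite (mult_only_pred pred) occ_chain. Qed.

End Chain.
End DeBruijn.



Section Tunneling.
Variables (S : seq nat) (k : nat) (P : seq (seq (seq nat))).
Hypothesis vS : valid_text S.
Hypothesis hk : 1 <= k < size S.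
Hypothesis P_chains : forall p, p \in P ->
  [/\ 2 <= size p, uniq p & all (fun x => x \in dbg_nodes S k) p].
Hypothesis P_disjoint : forall l1 l2, l1 < size P -> l2 < size P -> l1 != l2 ->
  forall x, x \in nth [::] P l1 -> x \notin nth [::] P l2.
Hypothesis P_unique : forall p, p \in P -> forall t, t.+1 < size p ->
  only_succ S k (nth [::] p t) (nth [::] p t.+1) /\
  only_pred S k (nth [::] p t) (nth [::] p t.+1).
Hypothesis P_fusible : forall x y, x \in dbg_nodes S k -> y \in dbg_nodes S k ->
  fusible S k x y -> exists2 p, p \in P & exists2 t, t.+1 < size p &
    x = nth [::] p t /\ y = nth [::] p t.+1.
Local Notation M := (BWM S).
Local Notation N := (dbg_nodes S k).
Local Notation lo p := (xint_lo S (last [::] p)).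
Local Notation hi p := (xint_hi S (last [::] p)).

Lemma chains_share_node (p1 p2 : seq (seq nat)) (x : seq nat) :
  p1 \in P -> p2 \in P -> x \in p1 -> x \in p2 -> p1 = p2.
Proof.
move=> p1P p2P xp1 xp2; apply/eqP/negPn/negP => ne.
have neq : index p1 P != index p2 P.
  by apply: contra ne => /eqP e; rewrite -(nth_index [::] p1P) e nth_index.
have := P_disjoint (etrans (index_mem _ _) p1P) (etrans (index_mem _ _) p2P) neq.
by rewrite !nth_index // => /(_ x xp1); rewrite xp2.
Qed.

Lemma uniq_chains : uniq P.
Proof.
apply/(uniqP [::]) => i j iP jP e; apply/eqP/negPn/negP => ne.
have [p2 _ _] := P_chains (mem_nth [::] iP).
have x_in : nth [::] (nth [::] P i) 0 \in nth [::] P i by rewrite mem_nth // ltnW.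
by have := P_disjoint iP jP ne x_in; rewrite -e x_in.
Qed.

Lemma last_chain_node (p : seq (seq nat)) : p \in P -> last [::] p \in N.
Proof.
by case/P_chains => p2 _ /allP; apply; rewrite -nth_last mem_nth // ltn_predL ltnW.
Qed.

Definition tunnel_range (p : seq (seq nat)) :=
  [seq (y, t) | y <- iota (lo p).+1 (hi p - lo p), t <- iota 0 (size p).-1].

Definition tunneled := [seq iter yt.2 (LF S) yt.1 | p <- P, yt <- tunnel_range p].

Lemma tunnel_range_row (p : seq (seq nat)) y t : p \in P -> (y, t) \in tunnel_range p ->
  exists2 u, u \in M & [/\ t < (size p).-1, y = (index u M).+1,
    iter t (LF S) y = (index (iter t (rotr 1) u) M).+1 &
    take k (iter t (rotr 1) u) = nth [::] p ((size p).-1 - t)].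
Proof.
move=> pP /allpairsP[[y' t'] [/= yI tI [ey et]]]; subst y' t'; move: yI tI.
rewrite !mem_iota /= => yI tI.
have [/= yM uy] := interval_rows hk (last_chain_node pP) (y := y) ltac:(lia).
set u := nth [::] M y.-1 in uy.
have uM : u \in M by exact: mem_nth.
have yu : y = (index u M).+1 by rewrite index_uniq ?uniq_BWM //; lia.
exists u => //; split=> //.
  by rewrite {1}yu iter_LF_index.
by rewrite (take_iter_rotr_chain hk (P_unique pP)) //; lia.
Qed.

Lemma deletedE q : deleted S P q = (q \in tunneled).
Proof.
apply/hasP/allpairsPdep => [[p pP /hasP[y yI /hasP[t tI /eqP ->]]]|].
  by exists p, (y, t); split=> //; apply/allpairsP; exists (y, t).
move=> [p [[y t] [pP /allpairsP[[y' t'] [yI tI [ey et]]] ->]]]; subst y' t'.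
by exists p => //; apply/hasP; exists y => //; apply/hasP; exists t.
Qed.

Lemma tunneled_sub : {subset tunneled <= iota 1 (size S)}.
Proof.
move=> q /allpairsPdep[p [[y t] [pP ytI ->]]].
have [u uM [_ _ -> _]] := tunnel_range_row pP ytI.
by rewrite mem_iota /= add1n ltnS -(size_BWM S) index_mem BWM_iter_rotr1.
Qed.

(* Distinct chains go through distinct rows, since they are node-disjoint. *)
Lemma uniq_tunneled : uniq tunneled.
Proof.
apply: allpairs_uniq_dep => [||z1 z2]; first exact: uniq_chains.
  move=> p _; apply: allpairs_uniq; rewrite ?iota_uniq //.
  by move=> [a b] [c d] _ _ /= [-> ->].
move=> /allpairsPdep[p1 [[y1 t1] [p1P yt1 ->]]] /allpairsPdep[p2 [[y2 t2] [p2P yt2 ->]]] /=.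
have [u1 u1M [t1p ->  -> x1]] := tunnel_range_row p1P yt1.
have [u2 u2M [t2p -> -> x2]] := tunnel_range_row p2P yt2.
(* [lia] would treat the two elaborations of [size p1] as distinct atoms. *)
set w1 := size p1 in t1p x1 *; set w2 := size p2 in t2p x2 *.
case=> /(congr1 (nth [::] M)); rewrite !nth_index ?BWM_iter_rotr1 // => e.
have [_ p1_uniq _] := P_chains p1P.
have ep : p1 = p2.
  apply: (@chains_share_node _ _ (take k (iter t1 (rotr 1) u1))) => //.
    by rewrite x1 mem_nth //; lia.
  by rewrite e x2 mem_nth //; lia.
subst p2; have et : t1 = t2.
  by move: x1; rewrite e x2 => /eqP; rewrite nth_uniq //; lia.
by subst t2; rewrite (iter_inj (rotr_inj (n0:=1)) e).
Qed.

Lemma size_tunneled : size tunneled = \sum_(p <- P) (hi p - lo p) * (size p).-1.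
Proof.
rewrite size_allpairs_dep sumnE big_map; apply: eq_bigr => p _.
by rewrite size_allpairs !size_iota.
Qed.

Lemma size_Lprime_add_tunneled : size (Lprime S P) + size tunneled = size S.
Proof.
rewrite /Lprime size_map size_filter -(count_mem_sub (iota_uniq 1 _) uniq_tunneled tunneled_sub).
by rewrite -(eq_count deletedE) addnC count_predC size_iota.
Qed.

Definition chain_edges :=
  [seq (nth [::] p t, nth [::] p t.+1) | p <- P, t <- iota 0 (size p).-1].

Lemma perm_fusible_chain_edges :
  perm_eq [seq e <- [seq (x, y) | x <- N, y <- N] | fusibleb S k e.1 e.2] chain_edges.
Proof.
apply: uniq_perm.
- by rewrite filter_uniq // allpairs_uniq ?undup_uniq // => -[a b] [c d] _ _ /= [-> ->].
- apply: allpairs_uniq_dep => [||z1 z2]; [exact: uniq_chains | by move=> p _; exact: iota_uniq |].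
  move=> /allpairsPdep[p1 [t1 [p1P + ->]]] /allpairsPdep[p2 [t2 [p2P + ->]]] /=.
  rewrite !mem_iota /= !add0n !ltn_predRL => /ltnW t1p /ltnW t2p [e _].
  have [_ p1_uniq _] := P_chains p1P.
  have ep : p1 = p2.
    by apply: (@chains_share_node _ _ (nth [::] p1 t1)) => //; last rewrite e; exact: mem_nth.
  by subst p2; move: e => /eqP; rewrite nth_uniq // => /eqP ->.
move=> [x y]; rewrite mem_filter /=; apply/andP/allpairsPdep.
  move=> [/fusibleP fxy /allpairsP[[x' y'] [/= xN yN [ex ey]]]]; subst x' y'.
  have [p pP [t tp [-> ->]]] := P_fusible xN yN fxy.
  by exists p, t; rewrite mem_iota /= add0n ltn_predRL.
move=> [p [t [pP + [-> ->]]]]; rewrite mem_iota /= add0n ltn_predRL => tp.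
have [_ _ /allP p_nodes] := P_chains pP.
split; first by apply/fusibleP; apply: P_unique.
by apply/allpairsP; exists (nth [::] p t, nth [::] p t.+1); rewrite !p_nodes ?mem_nth // ltnW.
Qed.

(* Each fused edge of a chain has multiplicity [occ] of its last node, which
   is one more than the length of that node's interval. *)
Lemma fusion_excess_chains :
  fusion_excess S k = \sum_(p <- P) (hi p - lo p) * (size p).-1.
Proof.
transitivity (\sum_(e <- [seq (x, y) | x <- N, y <- N])
               (if fusibleb S k e.1 e.2 then (mult S k e.1 e.2).-1 else 0)).
  by rewrite big_allpairs.
rewrite -big_mkcond -big_filter (perm_big _ perm_fusible_chain_edges) big_allpairs_dep /=.
apply: eq_big_seq => p pP; rewrite (interval_size hk (last_chain_node pP)).
rewrite (eq_big_seq (fun _ => (occ S k (last [::] p)).-1)); last first.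
  move=> t; rewrite mem_iota /= add0n ltn_predRL => tp.
  by rewrite mult_chain //; exact: P_unique.
by rewrite big_const_seq count_predT size_iota iter_addn_0 mulnC.
Qed.

End Tunneling.

Theorem mainTheorem9 (S : seq nat) (k : nat) (P : seq (seq (seq nat))) :
  valid_text S ->
  1 <= k < size S ->
  (forall p, p \in P -> [/\ 2 <= size p, uniq p & all (fun x => x \in dbg_nodes S k) p]) ->
  (forall l1 l2, l1 < size P -> l2 < size P -> l1 != l2 ->
     forall x, x \in nth [::] P l1 -> x \notin nth [::] P l2) ->
  (forall p, p \in P -> forall t, t.+1 < size p ->
     only_succ S k (nth [::] p t) (nth [::] p t.+1) /\
     only_pred S k (nth [::] p t) (nth [::] p t.+1)) ->
  (forall x y, x \in dbg_nodes S k -> y \in dbg_nodes S k -> fusible S k x y ->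
     exists2 p, p \in P & exists2 t, t.+1 < size p &
       x = nth [::] p t /\ y = nth [::] p t.+1) ->
  size (Lprime S P) = mk S k.
Proof.
move=> vS hk P_chains P_disjoint P_unique P_fusible.
have := size_Lprime_add_tunneled vS hk P_chains P_disjoint P_unique.
rewrite size_tunneled -(fusion_excess_chains vS hk P_chains P_disjoint P_unique P_fusible).
by rewrite -(mk_add_fusion_excess hk); lia.
Qed.
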